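(* Let $\mathcal C=(C_v)_{v\in V}$ be a univalent circle packing in $S^2$ indexed by a finite set $V$, and let $\mathcal V_{\mathcal C}=\{U\subset V:\bigcap_{v\in U}C_v\neq\emptyset\}$. Let $\varepsilon\in(0,1)$. Then there exists $\delta\in(0,1)$ such that for every $\alpha\in\mathbb R^3$ with $1-\delta<|\alpha|<1$ we have \[V\setminus V_\alpha^1\in\mathcal V_{\mathcal C},\qquad\text{where } V_\alpha^1=\{v\in V: f_\alpha(C_v)\subset B_\varepsilon(\alpha/|\alpha|)\}.\]
   Context: $S^2$ is the unit sphere in $\mathbb R^3$; $B_\varepsilon(x)$ is the open Euclidean ball of radius $\varepsilon$ about $x$. A spherical cap is a connected closed subset of $S^2$ whose boundary in $S^2$ is a circle obtained as the intersection of $S^2$ with an affine plane (neither empty nor a point); a circle packing is a family of spherical caps, univalent if their interiors are mutually disjoint. For $\beta\in S^2$ let $H_\beta=\{y:\langle y-\beta,\beta\rangle=0\}$, $\pi_\beta:H_\beta\cup\{\infty\}\to S^2$ the stereographic projection $\pi_\beta(y)=\frac{4}{|\beta+y|^2}(\beta+y)-\beta$, $\pi_\beta(\infty)=-\beta$; for $\lambda>0$ let $D^\lambda_\beta(y)=\beta+\lambda(y-\beta)$, $D^\lambda_\beta(\infty)=\infty$, and $g^\lambda_\beta=\pi_\beta^{-1}\circ D^\lambda_\beta\circ\pi_\beta:S^2\to S^2$. For $\alpha$ in the open unit ball define $f_\alpha=g^{1-|\alpha|}_{\alpha/|\alpha|}$ if $\alpha\neq0$ and $f_0=\mathrm{Id}_{S^2}$.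 *)

From Stdlib Require Import Reals Lra FinFun.
Open Scope R_scope.

Definition R3 : Type := (R * R * R)%type.

Definition vadd (x y : R3) : R3 :=
  let '(x1, x2, x3) := x in let '(y1, y2, y3) := y in (x1 + y1, x2 + y2, x3 + y3).
Definition vscal (a : R) (x : R3) : R3 :=
  let '(x1, x2, x3) := x in (a * x1, a * x2, a * x3).
Definition vopp (x : R3) : R3 := vscal (-1) x.
Definition vsub (x y : R3) : R3 := vadd x (vopp y).
Definition dot (x y : R3) : R :=
  let '(x1, x2, x3) := x in let '(y1, y2, y3) := y in x1 * y1 + x2 * y2 + x3 * y3.
Definition vnorm (x : R3) : R := sqrt (dot x x).
Definition dist3 (x y : R3) : R := vnorm (vsub x y).
Definition vzero : R3 := (0, 0, 0).

Definition vec_eq_dec (x y : R3) : {x = y} + {x <> y}.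
Proof.
  destruct x as [[x1 x2] x3], y as [[y1 y2] y3].
  destruct (Req_EM_T x1 y1); [|right; congruence].
  destruct (Req_EM_T x2 y2); [|right; congruence].
  destruct (Req_EM_T x3 y3); [|right; congruence].
  left; subst; reflexivity.
Defined.

Definition S2 (x : R3) : Prop := vnorm x = 1.
Definition ball3 (x : R3) (eps : R) (y : R3) : Prop := dist3 y x < eps.

Definition subset3 (A B : R3 -> Prop) : Prop := forall x, A x -> B x.

Definition open3 (U : R3 -> Prop) : Prop :=
  forall x, U x -> exists r, 0 < r /\ subset3 (ball3 x r) U.
Definition closed3 (A : R3 -> Prop) : Prop :=
  forall x, (forall r, 0 < r -> exists y, A y /\ ball3 x r y) -> A x.
Definition connected3 (A : R3 -> Prop) : Prop :=
  ~ (exists U W : R3 -> Prop, open3 U /\ open3 W /\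
       (forall x, A x -> U x \/ W x) /\
       (exists x, A x /\ U x) /\ (exists x, A x /\ W x) /\
       (forall x, ~ (A x /\ U x /\ W x))).

(* boundary and interior relative to S^2 *)
Definition boundary_S2 (A : R3 -> Prop) (x : R3) : Prop :=
  S2 x /\ forall r, 0 < r ->
    (exists y, A y /\ ball3 x r y) /\ (exists y, S2 y /\ ~ A y /\ ball3 x r y).
Definition interior_S2 (A : R3 -> Prop) (x : R3) : Prop :=
  A x /\ exists r, 0 < r /\ forall y, S2 y -> ball3 x r y -> A y.

Definition is_circle (K : R3 -> Prop) : Prop :=
  exists (n : R3) (c : R), n <> vzero /\
    (forall x, K x <-> (S2 x /\ dot n x = c)) /\
    (exists x y, K x /\ K y /\ x <> y).

Definition spherical_cap (C : R3 -> Prop) : Prop :=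
  subset3 C S2 /\ connected3 C /\ closed3 C /\ is_circle (boundary_S2 C).

Definition univalent_packing {V : Type} (C : V -> R3 -> Prop) : Prop :=
  (forall v, spherical_cap (C v)) /\
  (forall v w, v <> w -> forall x, ~ (interior_S2 (C v) x /\ interior_S2 (C w) x)).

Definition in_VC {V : Type} (C : V -> R3 -> Prop) (U : V -> Prop) : Prop :=
  exists x, S2 x /\ forall v, U v -> C v x.

Definition H (beta y : R3) : Prop := dot (vsub y beta) beta = 0.

(* stereographic projection pi_beta : H_beta u {oo} -> S^2 ; None = oo *)
Definition pi (beta : R3) (y : option R3) : R3 :=
  match y with
  | Some y => vsub (vscal (4 / dot (vadd beta y) (vadd beta y)) (vadd beta y)) beta
  | None => vopp beta
  end.

Definition pi_inv (beta : R3) (x : R3) : option R3 :=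
  if vec_eq_dec x (vopp beta) then None
  else Some (vsub (vscal (4 / dot (vadd x beta) (vadd x beta)) (vadd x beta)) beta).

Definition Dil (beta : R3) (lam : R) (y : option R3) : option R3 :=
  match y with
  | Some y => Some (vadd beta (vscal lam (vsub y beta)))
  | None => None
  end.

Definition g (beta : R3) (lam : R) (x : R3) : R3 := pi beta (Dil beta lam (pi_inv beta x)).

Definition f (alpha : R3) (x : R3) : R3 :=
  if vec_eq_dec alpha vzero then x
  else g (vscal (/ vnorm alpha) alpha) (1 - vnorm alpha) x.

Definition V1 {V : Type} (C : V -> R3 -> Prop) (eps : R) (alpha : R3) (v : V) : Prop :=
  forall x, C v x -> ball3 (vscal (/ vnorm alpha) alpha) eps (f alpha x).

(** For [beta = alpha/|alpha|], [f_alpha] is stereographic projection from [-beta] onto the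
    tangent plane at [beta], a dilation by [1 - |alpha|] about [beta], and projection back;
    this gives [|f_alpha x - beta| * |x + beta| <= 4 (1 - |alpha|)] on [S^2].  So once
    [1 - |alpha| < eps eta / 4], every cap [C_v] not mapped into [B_eps(beta)] comes within
    [eta] of the point [-beta].  By compactness of [S^2], for [eta] small enough, closed caps
    which all come within [eta] of one point have a common point; since [V] has finitely
    many subsets, a single [eta] serves for all of them. *)

From Pilot Require Import Defs.
From Stdlib Require Import Reals FinFun Lra Lia List Classical IndefiniteDescription.
From mathcomp Require all_boot all_algebra all_classical topology normedtype.
From mathcomp Require Rstruct Rstruct_topology.

Open Scope R_scope.

Lemma dot_self_ge0 (x : R3) : 0 <= dot x x.
Proof.
  destruct x as [[x1 x2] x3]; cbn.
  repeat apply Rplus_le_le_0_compat; apply Rle_0_sqr.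
Qed.

Lemma vnorm_sqr (x : R3) : vnorm x * vnorm x = dot x x.
Proof. apply sqrt_sqrt, dot_self_ge0. Qed.

Lemma dot_sqr_le (x y : R3) : dot x y * dot x y <= dot x x * dot y y.
Proof.
  destruct x as [[x1 x2] x3], y as [[y1 y2] y3]; cbn.
  pose proof (Rle_0_sqr (x1 * y2 - x2 * y1)); pose proof (Rle_0_sqr (x1 * y3 - x3 * y1)).
  pose proof (Rle_0_sqr (x2 * y3 - x3 * y2)); unfold Rsqr in *; nra.
Qed.

Lemma dot_le_vnorm (x y : R3) : dot x y <= vnorm x * vnorm y.
Proof.
  destruct (Rle_or_lt (dot x y) 0).
  - pose proof (sqrt_pos (dot x x)); pose proof (sqrt_pos (dot y y)); unfold vnorm; nra.
  - unfold vnorm; rewrite <- sqrt_mult_alt by apply dot_self_ge0.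
    rewrite <- (sqrt_square (dot x y)) by lra.
    apply sqrt_le_1_alt, dot_sqr_le.
Qed.

Lemma vnorm_add_le (x y : R3) : vnorm (vadd x y) <= vnorm x + vnorm y.
Proof.
  pose proof (sqrt_pos (dot x x)); pose proof (sqrt_pos (dot y y)).
  unfold vnorm at 1; rewrite <- (sqrt_square (vnorm x + vnorm y)) by (unfold vnorm; lra).
  apply sqrt_le_1_alt.
  replace (dot (vadd x y) (vadd x y)) with (dot x x + 2 * dot x y + dot y y)
    by (destruct x as [[x1 x2] x3], y as [[y1 y2] y3]; cbn; ring).
  pose proof (dot_le_vnorm x y); pose proof (vnorm_sqr x); pose proof (vnorm_sqr y); nra.
Qed.

Lemma dist3_triangle (x y z : R3) : dist3 x z <= dist3 x y + dist3 y z.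
Proof.
  unfold dist3; replace (vsub x z) with (vadd (vsub x y) (vsub y z)).
  - apply vnorm_add_le.
  - destruct x as [[x1 x2] x3], y as [[y1 y2] y3], z as [[z1 z2] z3]; cbn.
    f_equal; [f_equal|]; ring.
Qed.

Lemma dist3_sym (x y : R3) : dist3 x y = dist3 y x.
Proof.
  destruct x as [[x1 x2] x3], y as [[y1 y2] y3]; unfold dist3, vnorm; cbn.
  f_equal; ring.
Qed.

Lemma dist3_refl (x : R3) : dist3 x x = 0.
Proof.
  destruct x as [[x1 x2] x3]; unfold dist3, vnorm; cbn.
  rewrite <- sqrt_0; f_equal; ring.
Qed.

Lemma dist3_le_sum_abs (a1 a2 a3 b1 b2 b3 : R) :
  dist3 (a1, a2, a3) (b1, b2, b3) <= Rabs (a1 - b1) + Rabs (a2 - b2) + Rabs (a3 - b3).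
Proof.
  pose proof (Rabs_pos (a1 - b1)); pose proof (Rabs_pos (a2 - b2)); pose proof (Rabs_pos (a3 - b3)).
  unfold dist3, vnorm; cbn.
  rewrite <- sqrt_square by lra; apply sqrt_le_1_alt.
  pose proof (Rsqr_abs (a1 - b1)); pose proof (Rsqr_abs (a2 - b2)); pose proof (Rsqr_abs (a3 - b3)).
  unfold Rsqr in *; nra.
Qed.

Lemma S2_dot (x : R3) : S2 x -> dot x x = 1.
Proof.
  unfold S2, vnorm; intros Sx.
  rewrite <- (sqrt_sqrt (dot x x)), Sx by apply dot_self_ge0; ring.
Qed.

Lemma S2_coord_bound (x1 x2 x3 : R) :
  S2 (x1, x2, x3) -> -1 <= x1 <= 1 /\ -1 <= x2 <= 1 /\ -1 <= x3 <= 1.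
Proof.
  intros Sx; apply S2_dot in Sx; cbn in Sx.
  pose proof (Rle_0_sqr x1); pose proof (Rle_0_sqr x2); pose proof (Rle_0_sqr x3).
  unfold Rsqr in *; repeat split; nra.
Qed.

Lemma S2_e1 : S2 (1, 0, 0).
Proof. unfold S2, vnorm; cbn; replace (1 * 1 + 0 * 0 + 0 * 0) with 1 by ring; apply sqrt_1. Qed.

Module CubeCompactness.
Import all_boot all_algebra all_classical topology normedtype Rstruct Rstruct_topology.
Local Open Scope classical_set_scope.

Lemma cube_seq_cluster (q : nat -> R * R * R) :
  (forall n, let '(x1, x2, x3) := q n in
     -1 <= x1 <= 1 /\ -1 <= x2 <= 1 /\ -1 <= x3 <= 1) ->
  exists l1 l2 l3, forall (r : R) (N : nat), 0 < r -> exists n, (N <= n)%coq_nat /\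
    let '(x1, x2, x3) := q n in
    Rabs (x1 - l1) < r /\ Rabs (x2 - l2) < r /\ Rabs (x3 - l3) < r.
Proof.
move=> q_cube.
pose cube : set (R * R * R) := (`[-1%R, 1%R] `*` `[-1%R, 1%R]) `*` `[-1%R, 1%R].
have cube_compact : compact cube.
  by apply: compact_setX; [apply: compact_setX|]; exact: segment_compact.
have [[[l1 l2] l3] [_ l_cluster]] : cube `&` cluster (q @ \oo) !=set0.
  apply: cube_compact; exists 0%N => // n _ /=; have := q_cube n; case: (q n) => [[x1 x2] x3].
  by rewrite /cube /= !in_itv /=; case=> -[/RleP -> /RleP ->] [] [/RleP -> /RleP ->] [/RleP -> /RleP ->].
exists l1, l2, l3 => r N /RltP r0.
have tail_N : (q @ \oo) (q @` [set n | (N <= n)%N]) by exists N => // n Nn; exists n.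
have [_ [[n /= Nn <-]] l_near] := l_cluster _ _ tail_N (nbhsx_ballx (l1, l2, l3) _ r0).
exists n; split; first by apply/ssrnat.leP.
case: (q n) l_near => [[x1 x2] x3] [[/= b1 b2] b3].
move: b1 b2 b3; rewrite /ball /= => /RltP b1 /RltP b2 /RltP b3.
by split; [|split]; rewrite Rabs_minus_sym RabsE.
Qed.
End CubeCompactness.

Lemma S2_seq_cluster (q : nat -> R3) :
  (forall n, S2 (q n)) ->
  exists Q, forall r N, 0 < r -> exists n, (N <= n)%nat /\ dist3 (q n) Q < r.
Proof.
  intros q_S2.
  destruct (CubeCompactness.cube_seq_cluster q) as [l1 [l2 [l3 Hl]]].
  { intro n; specialize (q_S2 n); destruct (q n) as [[x1 x2] x3].
    apply S2_coord_bound, q_S2. }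
  exists (l1, l2, l3); intros r N Hr.
  destruct (Hl (r / 3) N) as [n [Nn Hn]]; [lra|].
  exists n; split; [exact Nn|].
  destruct (q n) as [[x1 x2] x3].
  pose proof (dist3_le_sum_abs x1 x2 x3 l1 l2 l3); lra.
Qed.

Definition near_implies_meet {V : Type} (C : V -> R3 -> Prop) (U : V -> Prop) (eta : R) : Prop :=
  forall p, (forall v, U v -> exists x, C v x /\ dist3 x p < eta) -> in_VC C U.

Lemma near_implies_meet_ext {V : Type} (C : V -> R3 -> Prop) (U U' : V -> Prop) (eta : R) :
  (forall v, U v <-> U' v) -> near_implies_meet C U eta -> near_implies_meet C U' eta.
Proof.
  intros UU' HU p p_near.
  destruct (HU p) as [x [Sx Hx]].
  - intros v Uv; apply p_near, UU', Uv.
  - exists x; split; [exact Sx|]; intros v U'v; apply Hx, UU', U'v.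
Qed.

Lemma near_implies_meet_le {V : Type} (C : V -> R3 -> Prop) (U : V -> Prop) (eta eta' : R) :
  eta' <= eta -> near_implies_meet C U eta -> near_implies_meet C U eta'.
Proof.
  intros Heta HU p p_near; apply (HU p); intros v Uv.
  destruct (p_near v Uv) as [x [Cx Hx]]; exists x; split; [exact Cx | lra].
Qed.

Lemma closed_near_implies_meet {V : Type} (C : V -> R3 -> Prop) (U : V -> Prop) :
  (forall v, subset3 (C v) S2) -> (forall v, closed3 (C v)) ->
  exists eta, 0 < eta /\ near_implies_meet C U eta.
Proof.
  intros C_S2 C_closed.
  destruct (classic (in_VC C U)) as [meet | no_meet].
  { exists 1; split; [lra | intros p _; exact meet]. }
  destruct (classic (exists v0, U v0)) as [[v0 Uv0] | U_empty].
  2:{ exfalso; apply no_meet; exists (1, 0, 0); split; [exact S2_e1|].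
      intros v Uv; exfalso; eauto. }
  (* Otherwise points of [C v0] within [2/(n+1)] of every [C v] accumulate at a common point. *)
  apply NNPP; intros no_eta; apply no_meet.
  assert (near_seq : forall n : nat, exists q, C v0 q /\
            forall v, U v -> exists x, C v x /\ dist3 x q < 2 * / INR (S n)).
  { intro n.
    assert (not_near : ~ near_implies_meet C U (/ INR (S n))).
    { intro Hn; apply no_eta; exists (/ INR (S n)); split; [|exact Hn].
      apply Rinv_0_lt_compat, lt_0_INR; lia. }
    apply not_all_ex_not in not_near as [p Hp]; apply imply_to_and in Hp as [p_near _].
    destruct (p_near v0 Uv0) as [q [Cq Hq]].
    exists q; split; [exact Cq|]; intros v Uv.
    destruct (p_near v Uv) as [x [Cx Hx]]; exists x; split; [exact Cx|].
    pose proof (dist3_triangle x p q) as tri; rewrite (dist3_sym p q) in tri; lra. }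
  apply functional_choice in near_seq as [q Hq].
  destruct (S2_seq_cluster q) as [Q HQ]; [intro n; apply (C_S2 v0), Hq|].
  assert (C_Q : forall v, U v -> C v Q).
  { intros v Uv; apply C_closed; intros r Hr.
    destruct (archimed_cor1 (r / 4)) as [N [HN N_pos]]; [lra|].
    destruct (HQ (r / 2) N) as [n [Nn Hn]]; [lra|].
    destruct (proj2 (Hq n) v Uv) as [x [Cx Hx]].
    exists x; split; [exact Cx|]; unfold ball3.
    assert (/ INR (S n) <= / INR N).
    { apply Rinv_le_contravar; [apply lt_0_INR; lia | apply le_INR; lia]. }
    pose proof (dist3_triangle x (q n) Q); lra. }
  exists Q; split; [apply (C_S2 v0), C_Q, Uv0 | exact C_Q].
Qed.

Lemma uniform_eta_of_finite {V : Type} (P : (V -> Prop) -> R -> Prop) (l : list V) :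
  (forall U U' eta, (forall v, U v <-> U' v) -> P U eta -> P U' eta) ->
  (forall U eta eta', eta' <= eta -> P U eta -> P U eta') ->
  (forall U, exists eta, 0 < eta /\ P U eta) ->
  (forall v, In v l) ->
  exists eta, 0 < eta /\ forall U, P U eta.
Proof.
  intros P_ext P_le P_pointwise l_full.
  assert (between : forall (l' : list V) (W : V -> Prop), exists eta, 0 < eta /\
            forall U, (forall v, W v -> U v) -> (forall v, U v -> W v \/ In v l') -> P U eta).
  { induction l' as [|a l' IH]; intros W.
    - destruct (P_pointwise W) as [eta [eta_pos HW]].
      exists eta; split; [exact eta_pos|]; intros U WU UW.
      apply (P_ext W); [|exact HW].
      intro v; split; [apply WU | intro Uv; destruct (UW v Uv) as [|[]]; assumption].
    - destruct (IH W) as [eta1 [pos1 H1]], (IH (fun v => W v \/ v = a)) as [eta2 [pos2 H2]].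
      exists (Rmin eta1 eta2); split; [apply Rmin_pos; assumption|].
      intros U WU UW.
      destruct (classic (U a)) as [Ua | nUa].
      + apply (P_le U eta2); [apply Rmin_r|].
        apply H2; [intros v [Wv | ->]; auto|].
        intros v Uv; destruct (UW v Uv) as [| [-> | ]]; auto.
      + apply (P_le U eta1); [apply Rmin_l|].
        apply H1; [exact WU|].
        intros v Uv; destruct (UW v Uv) as [| [<- | ]]; [auto | contradiction | auto]. }
  destruct (between l (fun _ => False)) as [eta [eta_pos Heta]].
  exists eta; split; [exact eta_pos|]; intros U.
  apply Heta; [contradiction | intros v _; right; apply l_full].
Qed.

Lemma finite_near_implies_meet {V : Type} (C : V -> R3 -> Prop) :
  Finite V -> (forall v, subset3 (C v) S2) -> (forall v, closed3 (C v)) ->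
  exists eta, 0 < eta /\ forall U, near_implies_meet C U eta.
Proof.
  intros [l l_full] C_S2 C_closed.
  apply (uniform_eta_of_finite (near_implies_meet C) l).
  - apply near_implies_meet_ext.
  - apply near_implies_meet_le.
  - intro U; apply closed_near_implies_meet; assumption.
  - exact l_full.
Qed.

Lemma dot_self_eq0 (z : R3) : dot z z = 0 -> z = vzero.
Proof.
  destruct z as [[z1 z2] z3]; cbn; intros Hz.
  pose proof (Rle_0_sqr z1); pose proof (Rle_0_sqr z2); pose proof (Rle_0_sqr z3).
  unfold Rsqr in *.
  assert (z1 = 0) by nra. assert (z2 = 0) by nra. assert (z3 = 0) by nra.
  subst; reflexivity.
Qed.

Lemma vsub_vopp (x y : R3) : vsub x (vopp y) = vadd x y.
Proof. destruct x as [[x1 x2] x3], y as [[y1 y2] y3]; cbn; f_equal; [f_equal|]; ring. Qed.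

Lemma pi_inv_dist (b x : R3) :
  dot b b = 1 -> S2 x -> x <> vopp b ->
  exists y, pi_inv b x = Some y /\ H b y /\ dist3 y b * dist3 x (vopp b) <= 4.
Proof.
  intros Hb Sx xb.
  unfold pi_inv; destruct vec_eq_dec as [|_]; [contradiction|].
  eexists; split; [reflexivity|].
  assert (HD : 0 < dot (vadd x b) (vadd x b)).
  { destruct (Rle_lt_or_eq_dec _ _ (dot_self_ge0 (vadd x b))) as [|HD0]; [assumption|].
    apply eq_sym, dot_self_eq0 in HD0.
    destruct b as [[b1 b2] b3], x as [[x1 x2] x3]; cbn in HD0; injection HD0; intros.
    exfalso; apply xb; cbn; f_equal; [f_equal|]; lra. }
  apply S2_dot in Sx.
  unfold dist3 at 2; rewrite vsub_vopp.
  destruct b as [[b1 b2] b3], x as [[x1 x2] x3].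
  unfold H, dist3, vnorm, vsub, vadd, vopp, vscal, dot in *; cbn in *.
  set (D := (x1 + b1) * (x1 + b1) + (x2 + b2) * (x2 + b2) + (x3 + b3) * (x3 + b3)) in *.
  set (k := 4 / D).
  assert (Hk : k * D = 4) by (unfold k; field; lra).
  (* With [D = |x + b|^2 = 2 + 2 x.b] one gets [|y - b|^2 = 16/D - 4]. *)
  assert (Hxb : (x1 + b1) * b1 + (x2 + b2) * b2 + (x3 + b3) * b3 = D / 2) by (unfold D; lra).
  split.
  - replace (_ + _ + _) with (k * ((x1 + b1) * b1 + (x2 + b2) * b2 + (x3 + b3) * b3)
                              - 2 * (b1 * b1 + b2 * b2 + b3 * b3)) by ring.
    rewrite Hxb, Hb. lra.
  - assert (HD4 : D <= 4).
    { pose proof (Rle_0_sqr (x1 - b1)); pose proof (Rle_0_sqr (x2 - b2)).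
      pose proof (Rle_0_sqr (x3 - b3)); unfold Rsqr in *; unfold D; nra. }
    assert (Hk1 : 1 <= k) by nra.
    replace (_ + _ + _) with (k * (k * D) - 4 * k * ((x1 + b1) * b1 + (x2 + b2) * b2 + (x3 + b3) * b3)
                              + 4 * (b1 * b1 + b2 * b2 + b3 * b3)) by (unfold D; ring).
    rewrite Hk, Hxb, Hb, <- sqrt_mult_alt by nra.
    apply Rle_trans with (sqrt (4 * 4)); [apply sqrt_le_1_alt; nra|].
    rewrite sqrt_square; lra.
Qed.

Lemma pi_dist_le (b y : R3) :
  dot b b = 1 -> H b y -> dist3 (pi b (Some y)) b <= dist3 y b.
Proof.
  destruct b as [[b1 b2] b3], y as [[y1 y2] y3].
  unfold H, dist3, vnorm, pi, vsub, vadd, vopp, vscal, dot; cbn.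
  intros Hb Hy.
  apply sqrt_le_1_alt.
  set (W := (y1 + -1 * b1) * (y1 + -1 * b1) + (y2 + -1 * b2) * (y2 + -1 * b2) + (y3 + -1 * b3) * (y3 + -1 * b3)).
  set (E := (b1 + y1) * (b1 + y1) + (b2 + y2) * (b2 + y2) + (b3 + y3) * (b3 + y3)).
  assert (HE : E = 4 + W) by (unfold E, W; nra).
  (* [|pi y - b|^2 = 4 W / (4 + W)] where [W = |y - b|^2]. *)
  assert (HW : 0 <= W) by (unfold W; repeat apply Rplus_le_le_0_compat; apply Rle_0_sqr).
  assert (Hab : (b1 + y1) * b1 + (b2 + y2) * b2 + (b3 + y3) * b3 = 2) by lra.
  set (k := 4 / E).
  assert (Hk : k * E = 4) by (unfold k; field; lra).
  replace (_ + _ + _) with (k * (k * E) - 4 * k * ((b1 + y1) * b1 + (b2 + y2) * b2 + (b3 + y3) * b3)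
                            + 4 * (b1 * b1 + b2 * b2 + b3 * b3)) by (unfold E; ring).
  rewrite Hk, Hab, Hb.
  assert (0 <= k) by (unfold k; apply Rlt_le, Rdiv_lt_0_compat; lra).
  nra.
Qed.

Lemma H_dilate (b y : R3) (lam : R) : H b y -> H b (vadd b (vscal lam (vsub y b))).
Proof.
  destruct b as [[b1 b2] b3], y as [[y1 y2] y3]; unfold H; cbn; intros Hy.
  replace (_ + _ + _) with (lam * ((y1 + -1 * b1) * b1 + (y2 + -1 * b2) * b2 + (y3 + -1 * b3) * b3))
    by ring.
  rewrite Hy; ring.
Qed.

Lemma dist3_dilate (b y : R3) (lam : R) :
  0 <= lam -> dist3 (vadd b (vscal lam (vsub y b))) b = lam * dist3 y b.
Proof.
  intros Hlam; unfold dist3, vnorm.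
  replace (dot _ _) with (lam * lam * dot (vsub y b) (vsub y b))
    by (destruct b as [[b1 b2] b3], y as [[y1 y2] y3]; cbn; ring).
  rewrite sqrt_mult_alt, sqrt_square by nra; reflexivity.
Qed.

Lemma g_dist_center (b x : R3) (lam : R) :
  dot b b = 1 -> S2 x -> 0 <= lam -> dist3 (g b lam x) b * dist3 x (vopp b) <= 4 * lam.
Proof.
  intros Hb Sx Hlam.
  destruct (vec_eq_dec x (vopp b)) as [-> | xb].
  { rewrite dist3_refl; lra. }
  destruct (pi_inv_dist b x Hb Sx xb) as [y [Hy [Hby Hdist]]].
  unfold g; rewrite Hy; cbn [Dil].
  pose proof (pi_dist_le b _ Hb (H_dilate b y lam Hby)) as Hpi.
  rewrite dist3_dilate in Hpi by exact Hlam.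
  pose proof (sqrt_pos (dot (vsub x (vopp b)) (vsub x (vopp b)))).
  pose proof (sqrt_pos (dot (vsub y b) (vsub y b))).
  unfold dist3, vnorm in *; nra.
Qed.

Lemma dot_normalize (a : R3) :
  vnorm a <> 0 -> dot (vscal (/ vnorm a) a) (vscal (/ vnorm a) a) = 1.
Proof.
  intros Ha.
  replace (dot _ _) with (/ vnorm a * / vnorm a * dot a a)
    by (destruct a as [[a1 a2] a3]; cbn; ring).
  rewrite <- vnorm_sqr; field; exact Ha.
Qed.

Lemma f_dist_center (a x : R3) :
  0 < vnorm a <= 1 -> S2 x ->
  dist3 (Defs.f a x) (vscal (/ vnorm a) a) * dist3 x (vopp (vscal (/ vnorm a) a))
    <= 4 * (1 - vnorm a).
Proof.
  intros Ha Sx; unfold Defs.f; destruct vec_eq_dec as [-> | _].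
  - exfalso; unfold vnorm, vzero in Ha; cbn in Ha.
    replace (0 * 0 + 0 * 0 + 0 * 0) with 0 in Ha by ring; rewrite sqrt_0 in Ha; lra.
  - apply g_dist_center; [apply dot_normalize; lra | exact Sx | lra].
Qed.

Theorem lemma3p8 (V : Type) (HV : Finite V) (C : V -> R3 -> Prop)
  (HC : univalent_packing C) (eps : R) (Heps : 0 < eps < 1) :
  exists delta, 0 < delta < 1 /\
    forall alpha : R3, 1 - delta < vnorm alpha < 1 ->
      in_VC C (fun v => ~ V1 C eps alpha v).
Proof.
  destruct HC as [caps _].
  assert (C_S2 : forall v, subset3 (C v) S2) by (intro v; apply caps).
  assert (C_closed : forall v, closed3 (C v)) by (intro v; apply caps).
  destruct (finite_near_implies_meet C HV C_S2 C_closed) as [eta [eta_pos Heta]].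
  pose proof (Rmin_l (1 / 2) (eps * eta / 4)); pose proof (Rmin_r (1 / 2) (eps * eta / 4)).
  assert (0 < Rmin (1 / 2) (eps * eta / 4)) by (apply Rmin_pos; nra).
  exists (Rmin (1 / 2) (eps * eta / 4)); split; [lra|].
  intros alpha Halpha.
  apply (Heta _ (vopp (vscal (/ vnorm alpha) alpha))).
  intros v not_V1.
  apply not_all_ex_not in not_V1 as [x Hx]; apply imply_to_and in Hx as [Cx far].
  exists x; split; [exact Cx|].
  unfold ball3 in far; apply Rnot_lt_le in far.
  pose proof (f_dist_center alpha x ltac:(lra) (C_S2 v x Cx)).
  (* otherwise [eps eta <= |f x - beta| |x + beta| <= 4 (1 - |alpha|) < eps eta] *)
  apply Rnot_le_lt; intros not_near; nra.
Qed.
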